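(* For every pair of integers $n\ge 2$ and $1\le r\le n-1$, let $s:=\min\{r,n-r\}$. Then \[ \mathcal{K}^{\mathsf{TS}}(J(n,r))= \begin{cases} \{1\}, & n=2,\\ \{1,n-1\}, & n\ge 3\text{ and }s=1,\\ \{1,s\}, & s\ge 2\text{ and }n=2s,\\ \{1,s,n-s\}, & s\ge 2\text{ and }n>2s. \end{cases} \]
   Context: All graphs are finite, simple, undirected. A clique of a graph $H$ is a set of pairwise adjacent vertices; a $k$-clique is a clique with $k$ vertices. For a graph $H$ and integer $k\ge1$, the Token Sliding graph $\mathsf{TS}_k(H)$ has as vertices the $k$-cliques of $H$, and two $k$-cliques $A,B$ are adjacent iff $A\setminus B=\{u\}$, $B\setminus A=\{v\}$ for some vertices $u,v$ with $uv\in E(H)$. For a graph $G$, $\mathcal{K}^{\mathsf{TS}}(G)=\{k\ge1:\ \exists\text{ a graph }H\text{ with }\mathsf{TS}_k(H)\cong G\}$. The Johnson graph $J(n,r)$ has as vertices the $r$-subsets of $\{1,\dots,n\}$, two being adjacent iff their intersection has size $r-1$. *)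

From mathcomp Require Import all_boot.
Set Implicit Arguments. Unset Strict Implicit. Unset Printing Implicit Defensive.

Definition simple_graph (T : finType) (e : rel T) : Prop :=
  symmetric e /\ irreflexive e.

Definition graph_iso (V1 V2 : finType) (E1 : rel V1) (E2 : rel V2) : Prop :=
  exists f : V1 -> V2, bijective f /\ forall x y, E2 (f x) (f y) = E1 x y.

Definition is_clique (T : finType) (e : rel T) (A : {set T}) : bool :=
  [forall u in A, forall v in A, (u != v) ==> e u v].

Definition kclique (T : finType) (e : rel T) (k : nat) (A : {set T}) : bool :=
  is_clique e A && (#|A| == k).

Definition TS_vert (T : finType) (e : rel T) (k : nat) :=
  {A : {set T} | kclique e k A}.

Definition TS_adj (T : finType) (e : rel T) (k : nat) : rel (TS_vert e k) :=
  fun A B => [exists u, exists v,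
    [&& (val A :\: val B == [set u]), (val B :\: val A == [set v]) & e u v]].

Definition KTS (V : finType) (E : rel V) (k : nat) : Prop :=
  1 <= k /\ exists (T : finType) (e : rel T),
    simple_graph e /\ @graph_iso (TS_vert e k) V (@TS_adj T e k) E.

Definition J_vert (n r : nat) := {A : {set 'I_n} | #|A| == r}.

Definition J_adj (n r : nat) : rel (J_vert n r) :=
  fun A B => #|val A :&: val B| == r.-1.

From mathcomp Require Import all_boot zify.
Set Implicit Arguments. Unset Strict Implicit. Unset Printing Implicit Defensive.

(* Two adjacent k-cliques x = D \ v, y = D \ u of H span a (k+1)-clique D, and a
   common neighbour of x and y is either D \ d with d in C := D \ {u, v}, or
   t + C with t outside D; no vertex of the first kind equals or is adjacent to
   one of the second kind.  Hence for z = D \ d exactly k - 1 common neighbours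
   of x and y are equal or adjacent to z, and this count is invariant under graph
   isomorphism.  Applied to J(n, r) = TS_r(K_n), where C has r - 1 elements and
   the complement of D has n - r - 1, every triangle gives r - 1 or n - r - 1,
   so k is 1, r or n - r.  Conversely J(n, r) is TS_1(J(n, r)), TS_r(K_n), and,
   through complementation, TS_(n-r)(K_n). *)

Definition near_common_nbs (V : finType) (E : rel V) (x y z : V) : {set V} :=
  [set w | E x w && E y w && ((w == z) || E z w)].

Lemma card_near_common_nbs_iso (V1 V2 : finType) (E1 : rel V1) (E2 : rel V2)
    (f : V1 -> V2) : bijective f -> (forall a b, E2 (f a) (f b) = E1 a b) ->
  forall x y z, #|near_common_nbs E2 (f x) (f y) (f z)| = #|near_common_nbs E1 x y z|.
Proof.
move=> fbij fE x y z; have finj := bij_inj fbij; have [g fK gK] := fbij.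
rewrite -(card_imset _ finj); apply: eq_card => w.
by rewrite -[w]gK mem_imset // !inE !fE (inj_eq finj).
Qed.

Section SetFacts.
Variable T : finType.
Implicit Types (A B D : {set T}) (a b t u v : T).

Lemma setD1_setD1 D a b : b \in D -> a != b -> (D :\ a) :\: (D :\ b) = [set b].
Proof.
move=> bD ab; apply/setP => w; rewrite !inE.
case: (eqVneq w b) => [->|wb] /=; first by rewrite bD eq_sym ab.
by case: (w \in D); rewrite ?andbF.
Qed.

Lemma cardsD1D1 D u v : u \in D -> v \in D -> u != v -> #|D :\ u :\ v| = #|D| - 2.
Proof.
move=> uD vD uv; rewrite (cardsD1 u D) uD (cardsD1 v (D :\ u)) !inE eq_sym uv vD.
by rewrite add1n add1n subSS subSS subn0.
Qed.

Lemma cardsD_swap A B : #|A| = #|B| -> #|B :\: A| = #|A :\: B|.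
Proof. by move=> cAB; rewrite !cardsD cAB setIC. Qed.

Lemma setDCC A B : ~: A :\: ~: B = B :\: A.
Proof. by apply/setP => w; rewrite !inE negbK andbC. Qed.

Lemma setD1_of_subset A D : A \subset D -> #|D| = #|A|.+1 -> exists2 d, d \in D & A = D :\ d.
Proof.
move=> AD cD; have /cards1P[d dDA] : #|D :\: A| == 1.
  by rewrite cardsD (setIidPr AD) cD subSnn.
have /setDP[dD dA] : d \in D :\: A by rewrite dDA set11.
have cDd : #|D :\ d| = #|A| by move: cD; rewrite (cardsD1 d D) dD add1n => -[].
exists d => //; apply/eqP; rewrite eqEcard cDd leqnn andbT.
by apply/subsetP => w wA; rewrite !inE (subsetP AD) // andbT; apply: contraNneq dA => <-.
Qed.

Lemma setD_set1_union A B u v : A :\: B = [set u] -> B :\: A = [set v] ->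
  A = (A :|: B) :\ v /\ B = (A :|: B) :\ u.
Proof.
move=> /setP hAB /setP hBA; split; apply/setP => w; have := hAB w; have := hBA w;
  rewrite !inE; case: (w \in A) (w \in B) => [] [] /=; do 2?case: eqP => //=.
Qed.

Lemma setD_set1_mem A B a t : A :\: B = [set a] -> t \in A -> t != a -> t \in B.
Proof. by move=> AB tA; apply: contraNT => tB; rewrite -in_set1 -AB inE tA tB. Qed.

Lemma setD1_inj_in D : {in D &, injective (fun d => D :\ d)}.
Proof.
by move=> a b aD _ /setP/(_ a); rewrite !inE eqxx aD /= andbT => /esym/negbFE/eqP.
Qed.

Lemma setU1_inj_in A : {in ~: A &, injective (fun t => t |: A)}.
Proof.
move=> a b; rewrite inE => aA _ /setP/(_ a).
by rewrite !inE eqxx (negbTE aA) /= orbF => /esym/eqP.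
Qed.

End SetFacts.

Section TokenSliding.
Variables (T : finType) (e : rel T) (k : nat).
Hypothesis e_sym : symmetric e.
Implicit Types (A D : {set T}) (a b d t u v : T).
Local Notation V := (TS_vert e k).
Local Notation adj := (@TS_adj T e k).

Lemma cliqueP A : reflect {in A &, forall a b, a != b -> e a b} (is_clique e A).
Proof.
apply: (iffP forall_inP) => [cA a b aA bA|cA a aA].
  by have /forall_inP/(_ b bA)/implyP := cA a aA.
by apply/forall_inP => b bA; apply/implyP; apply: cA.
Qed.

Lemma card_TS_vert (x : V) : #|val x| = k.
Proof. by case: x => A /= /andP[_ /eqP]. Qed.

Lemma TS_vert_clique (x : V) : is_clique e (val x).
Proof. by case: x => A /= /andP[]. Qed.

Lemma kclique_setD1 D d : is_clique e D -> d \in D -> #|D| = k.+1 -> kclique e k (D :\ d).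
Proof.
move=> /cliqueP cD dD hD; apply/andP; split.
  by apply/cliqueP => a b /setD1P[_ aD] /setD1P[_ bD]; apply: cD.
by move: hD; rewrite (cardsD1 d D) dD add1n => -[->].
Qed.

Lemma TS_adjP (x y : V) : reflect
  (exists u v, [/\ val x :\: val y = [set u], val y :\: val x = [set v] & e u v]) (adj x y).
Proof.
apply: (iffP existsP) => [[u /existsP[v /and3P[/eqP h1 /eqP h2 h3]]]|[u [v [h1 h2 h3]]]].
  by exists u, v.
by exists u; apply/existsP; exists v; rewrite h1 h2 !eqxx.
Qed.

Lemma TS_adj_irr (x : V) : adj x x = false.
Proof.
by apply/TS_adjP => -[u [v [h _ _]]]; have := set11 u; rewrite -h setDv inE.
Qed.

Lemma TS_adj_sym (x y : V) : adj x y = adj y x.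
Proof. by apply/TS_adjP/TS_adjP => -[u [v [h1 h2 h3]]]; exists v, u; rewrite e_sym. Qed.

Lemma TS_adj_setD1 D a b (x y : V) : is_clique e D -> a \in D -> b \in D -> a != b ->
  val x = D :\ a -> val y = D :\ b -> adj x y.
Proof.
move=> /cliqueP cD aD bD ab hx hy; apply/TS_adjP; exists b, a.
have ba : b != a by rewrite eq_sym.
by rewrite hx hy (setD1_setD1 bD ab) (setD1_setD1 aD ba); split => //; apply: cD.
Qed.

Lemma TS_adj_clique (x y : V) : adj x y -> exists D u v,
  [/\ val x = D :\ v, val y = D :\ u, [/\ u \in D, v \in D & u != v],
      #|D| = k.+1 & is_clique e D].
Proof.
case/TS_adjP => u [v [xy yx euv]].
have /setDP[ux uy] : u \in val x :\: val y by rewrite xy set11.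
have /setDP[vy vx] : v \in val y :\: val x by rewrite yx set11.
have [hx hy] := setD_set1_union xy yx.
set D := val x :|: val y in hx hy.
have vD : v \in D by rewrite inE vy orbT.
exists D, u, v; split => //.
- by rewrite inE ux; split => //; apply: contraNneq vx => <-.
- by move: (card_TS_vert x); rewrite hx (cardsD1 v D) vD add1n => <-.
apply/cliqueP => a b; rewrite !inE.
have /cliqueP cx := TS_vert_clique x; have /cliqueP cy := TS_vert_clique y.
have in_y := setD_set1_mem xy; have in_x := setD_set1_mem yx.
case/orP=> [ax|ay] /orP[bx|by_] ab.
- exact: cx.
- have [bv|bv] := eqVneq b v; last exact: cx (in_x b by_ bv) ab.
  subst b; have [au|au] := eqVneq a u; first by subst a.
  exact: cy (in_y a ax au) vy ab.
- have [av|av] := eqVneq a v; last exact: cx (in_x a ay av) bx ab.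
  subst a; have [bu|bu] := eqVneq b u; first by subst b; rewrite e_sym.
  exact: cy vy (in_y b bx bu) ab.
- exact: cy.
Qed.

Lemma TS_far (x w : V) p q : p != q -> p \in val x :\: val w -> q \in val x :\: val w ->
  (x == w) || adj x w = false.
Proof.
move=> pq pxw qxw; apply/norP; split.
  by apply: contraTneq pxw => ->; rewrite setDv inE.
apply/TS_adjP => -[a [b [xw _ _]]].
by move: pxw qxw pq; rewrite xw => /set1P -> /set1P ->; rewrite eqxx.
Qed.

Section Complete.
Hypothesis e_complete : forall a b, a != b -> e a b.

Lemma TS_complete_adjE (x y : V) : adj x y = (#|val x :\: val y| == 1).
Proof.
apply/TS_adjP/idP => [[u [v [xy _ _]]]|/cards1P[u xy]]; first by rewrite xy cards1.
have /cards1P[v yx] : #|val y :\: val x| == 1.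
  by rewrite cardsD_swap ?xy ?cards1 // !card_TS_vert.
exists u, v; split => //; apply: e_complete.
have /setDP[ux _] : u \in val x :\: val y by rewrite xy set11.
have /setDP[_ vx] : v \in val y :\: val x by rewrite yx set11.
by apply: contraNneq vx => <-.
Qed.

Lemma TS_complete_adj_common (x w : V) A : A \subset val x -> A \subset val w ->
  #|A| = k.-1 -> x != w -> adj x w.
Proof.
move=> Ax Aw cA xw; rewrite TS_complete_adjE.
have le1 : #|val x :\: val w| <= #|val x :\: A| by apply/subset_leq_card/setDS.
rewrite [#|_ :\: A|]cardsD (setIidPr Ax) card_TS_vert cA in le1.
suff : 0 < #|val x :\: val w| by lia.
rewrite card_gt0; apply: contra xw; rewrite setD_eq0 => xsw.
by rewrite -val_eqE eqEcard xsw !card_TS_vert leqnn.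
Qed.

End Complete.

Section Edge.
Variables (D : {set T}) (u v : T) (x y : V).
Hypotheses (uD : u \in D) (vD : v \in D) (uv : u != v) (cardD : #|D| = k.+1).
Hypotheses (hx : val x = D :\ v) (hy : val y = D :\ u).
Local Notation C := (D :\ u :\ v).

Lemma card_common_clique : #|C| = k.-1.
Proof. by rewrite cardsD1D1 // cardD subn2. Qed.

Lemma TS_common_nb_inside (w : V) a : adj y w -> val w :\: val x = [set a] ->
  a \in D -> exists2 d, d \in C & val w = D :\ d.
Proof.
move=> ayw wx aD; have /setDP[aw ax] : a \in val w :\: val x by rewrite wx set11.
have av : a = v by apply/eqP; move: ax; rewrite hx !inE aD andbT negbK.
have wD : val w \subset D.
  apply/subsetP => t tw; have [-> //|ta] := eqVneq t a.
  by have := setD_set1_mem wx tw ta; rewrite hx => /setD1P[].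
have [d dD wd] : exists2 d, d \in D & val w = D :\ d.
  by apply: setD1_of_subset; rewrite // card_TS_vert.
exists d => //; rewrite !inE dD andbT; apply/andP; split.
  by apply: contraTneq aw => dv; rewrite wd av -dv !inE eqxx.
apply: contraTneq ayw => du; suff -> : w = y by rewrite TS_adj_irr.
by apply: val_inj; rewrite wd du hy.
Qed.

Lemma TS_common_nb_outside (w : V) a : adj y w -> val w :\: val x = [set a] ->
  a \notin D -> val w = a |: C.
Proof.
move=> ayw wx aD; have /setDP[aw _] : a \in val w :\: val x by rewrite wx set11.
have wy : val w :\: val y = [set a].
  have /TS_adjP[_ [a' [_ wy _]]] := ayw; rewrite wy; congr [set _].
  by apply/esym/set1P; rewrite -wy inE aw hy !inE (negbTE aD) andbF.
rewrite -[val w](setD1K aw); congr (_ |: _); apply/eqP.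
rewrite eqEcard card_common_clique (_ : #|val w :\ a| = k.-1); last first.
  by move: (card_TS_vert w); rewrite (cardsD1 a) aw; lia.
rewrite leqnn andbT; apply/subsetP => t /setD1P[ta tw].
have := setD_set1_mem wx tw ta; have := setD_set1_mem wy tw ta.
by rewrite hx hy !inE => /andP[-> ->] /andP[-> _].
Qed.

Lemma TS_common_nbP (w : V) : adj x w -> adj y w ->
  (exists2 d, d \in C & val w = D :\ d) \/ (exists2 t, t \notin D & val w = t |: C).
Proof.
move=> /TS_adjP[_ [a [_ wx _]]] ayw; have [aD|aD] := boolP (a \in D).
  by left; apply: TS_common_nb_inside ayw wx aD.
by right; exists a => //; apply: TS_common_nb_outside ayw wx aD.
Qed.

Lemma TS_inside_outside_far (z w : V) d t : d \in C -> t \notin D ->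
  val z = D :\ d -> val w = t |: C -> (z == w) || adj z w = false.
Proof.
move=> /setD1P[dv /setD1P[du _]] tD hz hw.
have neq_t s : s \in D -> (s == t) = false by move=> sD; apply: contraNF tD => /eqP <-.
apply: (TS_far uv); rewrite hz hw !inE eqxx ?neq_t //= ?andbF /=.
  by rewrite eq_sym du uD.
by rewrite eq_sym dv vD.
Qed.

Lemma card_near_common_nbs_inside (z : V) d0 : is_clique e D -> d0 \in C ->
  val z = D :\ d0 -> #|near_common_nbs adj x y z| = k.-1.
Proof.
move=> cD d0C hz; rewrite -card_common_clique -(card_imset _ val_inj).
have CD : {subset C <= D} by move=> d /setD1P[_ /setD1P[]].
rewrite -(card_in_imset (sub_in2 CD (@setD1_inj_in _ D))).
congr #|pred_of_set _|; apply/setP => W; apply/imsetP/imsetP => -[w].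
  rewrite inE => /andP[/andP[axw ayw] zw] ->.
  have [//|[t tD hw]] := TS_common_nbP axw ayw.
  by have := TS_inside_outside_far d0C tD hz hw; rewrite eq_sym zw.
move=> /[dup] wC /setD1P[wv /setD1P[wu wD]] ->.
exists (exist (kclique e k) _ (kclique_setD1 cD wD cardD)) => //.
rewrite inE (TS_adj_setD1 cD vD wD _ hx) 1?eq_sym //.
rewrite (TS_adj_setD1 cD uD wD _ hy) 1?eq_sym //=.
have [wd0|wd0] := eqVneq w d0; first by apply/orP; left; rewrite -val_eqE /= hz wd0.
by rewrite (TS_adj_setD1 cD (CD _ d0C) wD _ hz) ?orbT // eq_sym.
Qed.

Lemma kclique_outside t : (forall a b, a != b -> e a b) -> t \notin D -> kclique e k (t |: C).
Proof.
move=> e_complete tD; apply/andP; split; first by apply/cliqueP => a b _ _; apply: e_complete.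
have k_gt0 : 0 < k.
  move: cardD; rewrite (cardsD1 u D) uD add1n => -[<-].
  by apply/card_gt0P; exists v; rewrite !inE eq_sym uv.
have tC : t \notin C by rewrite !inE (negbTE tD) !andbF.
by rewrite cardsU1 tC card_common_clique; case: (k) k_gt0.
Qed.

Lemma card_near_common_nbs_outside (z : V) t0 : (forall a b, a != b -> e a b) ->
  t0 \notin D -> val z = t0 |: C -> #|near_common_nbs adj x y z| = #|~: D|.
Proof.
move=> e_complete t0D hz; rewrite -(card_imset _ val_inj).
have notin_C t : t \in ~: D -> t \in ~: C by rewrite !inE => /negbTE ->; rewrite !andbF.
rewrite -(card_in_imset (sub_in2 notin_C (@setU1_inj_in _ C))).
congr #|pred_of_set _|; apply/setP => W; apply/imsetP/imsetP => [[w]|[t]].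
  rewrite inE => /andP[/andP[axw ayw] zw] ->.
  have [[d dC hw]|[t tD hw]] := TS_common_nbP axw ayw; last by exists t; rewrite ?inE.
  by have := TS_inside_outside_far dC t0D hw hz; rewrite TS_adj_sym zw.
rewrite inE => tD ->.
pose wt : V := exist (kclique e k) _ (kclique_outside e_complete tD).
have adj_wt (s : V) : C \subset val s -> t \notin val s -> adj s wt.
  move=> Cs ts; apply: (TS_complete_adj_common e_complete Cs _ card_common_clique).
    exact: subsetUr.
  by apply: contraNneq ts => ->; rewrite setU11.
have notin_setD1 s : t \notin D :\ s by rewrite !inE (negbTE tD) andbF.
exists wt => //; rewrite inE -andbA; apply/and3P; split.
- by apply: adj_wt; rewrite hx ?notin_setD1 // setSD // subsetDl.
- by apply: adj_wt; rewrite hy ?notin_setD1 // subsetDl.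
have [tt0|tt0] := eqVneq t t0; first by apply/orP; left; rewrite -val_eqE /= hz tt0.
apply/orP; right; apply: adj_wt; rewrite hz ?subsetUr //.
by rewrite in_setU1 negb_or tt0 -in_setC notin_C // inE.
Qed.

End Edge.
End TokenSliding.

Lemma graph_iso_of_inj_onto (V1 V2 : finType) (E1 : rel V1) (E2 : rel V2) (g : V2 -> V1) :
  injective g -> (forall x, exists y, x = g y) ->
  (forall a b, E1 (g a) (g b) = E2 a b) -> graph_iso E1 E2.
Proof.
move=> ginj gonto gE.
have cardV : #|V1| <= #|V2|.
  rewrite -(card_codom ginj); apply/subset_leq_card/subsetP => x _.
  by have [y ->] := gonto x; exact: codom_f.
have [f gK fK] := inj_card_bij ginj cardV.
by exists f; split; [exists g | move=> x y; rewrite -gE !fK].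
Qed.

Lemma TS1_iso (V : finType) (E : rel V) : irreflexive E -> graph_iso (@TS_adj V E 1) E.
Proof.
move=> Eirr.
have k1 p : kclique E 1 [set p].
  by rewrite /kclique cards1 andbT; apply/cliqueP => a b /set1P -> /set1P ->; rewrite eqxx.
apply: (@graph_iso_of_inj_onto _ _ _ _ (fun p => exist _ [set p] (k1 p))).
- by move=> p q /(congr1 val) /set1_inj.
- move=> x; have /cards1P[p xp] : #|val x| == 1 by rewrite card_TS_vert.
  by exists p; apply: val_inj.
move=> p q; have [<-|pq] := eqVneq p q; first by rewrite TS_adj_irr Eirr.
have set1D a b : a != b -> [set a] :\: [set b] = [set a].
  by move=> ab; apply/setDidPl; rewrite disjoints1 in_set1.
have qp : q != p by rewrite eq_sym.
apply/TS_adjP/idP => /= [[u [v []]]|Epq]; rewrite set1D // set1D //.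
  by move=> /set1_inj <- /set1_inj <-.
by exists p, q.
Qed.

Definition Kn (n : nat) : rel 'I_n := fun a b => a != b.
Arguments Kn : clear implicits.

Lemma Kn_simple n : simple_graph (Kn n).
Proof. by split => [a b | a]; rewrite /Kn ?eqxx // eq_sym. Qed.

Lemma J_adjE n r (A B : J_vert n r) : 0 < r -> J_adj A B = (#|val A :\: val B| == 1).
Proof.
move=> r_gt0; rewrite /J_adj cardsD; have cA : #|val A| = r := eqP (valP A).
have : #|val A :&: val B| <= #|val A| by rewrite subset_leq_card // subsetIl.
by move=> le_cA; apply/eqP/eqP; lia.
Qed.

Lemma TS_Kn_iso_J n r : 0 < r -> graph_iso (@TS_adj _ (Kn n) r) (@J_adj n r).
Proof.
move=> r_gt0.
have kc (A : J_vert n r) : kclique (Kn n) r (val A).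
  by rewrite /kclique (valP A) andbT; apply/cliqueP => a b _ _.
apply: (@graph_iso_of_inj_onto _ _ _ _ (fun A => exist _ (val A) (kc A))).
- by move=> A B /(congr1 val) /= /val_inj.
- move=> x; have cx : #|val x| == r by rewrite card_TS_vert.
  by exists (exist _ (val x) cx); apply: val_inj.
by move=> A B; rewrite TS_complete_adjE // J_adjE.
Qed.

Lemma TS_Kn_compl_iso_J n r : 0 < r -> r < n ->
  graph_iso (@TS_adj _ (Kn n) (n - r)) (@J_adj n r).
Proof.
move=> r_gt0 lt_rn.
have cardC (A : {set 'I_n}) m : m <= n -> (#|~: A| == n - m) = (#|A| == m).
  by move=> le_mn; have := cardsC A; rewrite card_ord => cA; apply/eqP/eqP; lia.
have le_rn : r <= n by apply: ltnW.
have kc (A : J_vert n r) : kclique (Kn n) (n - r) (~: val A).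
  by rewrite /kclique cardC // (valP A) andbT; apply/cliqueP => a b _ _.
apply: (@graph_iso_of_inj_onto _ _ _ _ (fun A => exist _ (~: val A) (kc A))).
- by move=> A B /(congr1 val) /= /setC_inj /val_inj.
- move=> x; have cx : #|~: val x| == r.
    by have := cardC (val x) _ (leq_subr r n); rewrite subKn // card_TS_vert eqxx.
  by exists (exist _ (~: val x) cx); apply: val_inj; rewrite /= setCK.
move=> A B; rewrite TS_complete_adjE // J_adjE //= setDCC cardsD_swap //.
by rewrite (eqP (valP A)) (eqP (valP B)).
Qed.

Lemma card_near_common_nbs_J n r (P Q R : J_vert n r) : 0 < r ->
  J_adj P Q -> J_adj P R -> J_adj Q R ->
  #|near_common_nbs (@J_adj n r) P Q R| = r.-1 \/
  #|near_common_nbs (@J_adj n r) P Q R| = n - r.+1.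
Proof.
move=> r_gt0 PQ PR QR; have [Kn_sym _] := Kn_simple n.
have [f [fbij fE]] := TS_Kn_iso_J n r_gt0; have [g fK gK] := fbij.
have adj_g A B : J_adj A B -> TS_adj (g A) (g B) by rewrite -fE !gK.
rewrite -(gK P) -(gK Q) -(gK R) (card_near_common_nbs_iso fbij fE).
have [D [u [v [hx hy [uD vD uv] cardD cD]]]] := TS_adj_clique Kn_sym (adj_g _ _ PQ).
have [[d dC hz]|[t tD hz]] := TS_common_nbP uD vD uv cardD hx hy (adj_g _ _ PR) (adj_g _ _ QR).
  by left; rewrite (card_near_common_nbs_inside uD vD uv cardD hx hy cD dC hz).
right; rewrite (card_near_common_nbs_outside Kn_sym uD vD uv cardD hx hy _ tD hz) //.
by have := cardsC D; rewrite card_ord cardD; lia.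
Qed.

Lemma J_simple n r : 0 < r -> simple_graph (@J_adj n r).
Proof.
move=> r_gt0; split=> [A B | A]; first by rewrite /J_adj setIC.
by rewrite /J_adj setIid (eqP (valP A)) eq_sym ltn_eqF // ltn_predL.
Qed.

Lemma J_edge n r : 0 < r -> r < n -> exists P Q : J_vert n r, J_adj P Q.
Proof.
move=> r_gt0 lt_rn.
have /card_gt0P[D] : 0 < #|[set A : {set 'I_n} | #|A| == r.+1]|.
  by rewrite card_draws card_ord bin_gt0.
rewrite inE => /eqP cardD.
have cD1 d : d \in D -> #|D :\ d| == r.
  by move=> dD; move: cardD; rewrite (cardsD1 d) dD add1n => -[->].
have /card_gt0P[u uD] : 0 < #|D| by rewrite cardD.
have /card_gt0P[v /setD1P[vu vD]] : 0 < #|D :\ u| by rewrite (eqP (cD1 u uD)).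
pose J_of d (dD : d \in D) : J_vert n r := Sub (D :\ d) (cD1 d dD).
exists (J_of v vD), (J_of u uD).
by rewrite J_adjE //= setD1_setD1 ?cards1.
Qed.

Lemma KTS_J_sub n r k : 0 < r -> r < n -> KTS (@J_adj n r) k ->
  k = 1 \/ k = r \/ k = n - r.
Proof.
move=> r_gt0 lt_rn [k_gt0 [T [e [[e_sym _] [f [fbij fE]]]]]].
have [->|k_neq1] := eqVneq k 1; [by left | right].
have [g fK gK] := fbij; have [P [Q PQ]] := J_edge r_gt0 lt_rn.
have xy : TS_adj (g P) (g Q) by rewrite -fE !gK.
have [D [u [v [hx hy [uD vD uv] cardD cD]]]] := TS_adj_clique e_sym xy.
have /card_gt0P[d dC] : 0 < #|D :\ u :\ v|.
  by rewrite (card_common_clique uD vD uv cardD); lia.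
have /setD1P[dv /setD1P[du dD]] := dC.
pose z : TS_vert e k := exist (kclique e k) _ (kclique_setD1 cD dD cardD).
have xz : TS_adj (g P) z by apply: (TS_adj_setD1 cD vD dD _ hx); rewrite // eq_sym.
have yz : TS_adj (g Q) z by apply: (TS_adj_setD1 cD uD dD _ hy); rewrite // eq_sym.
have := @card_near_common_nbs_J n r (f (g P)) (f (g Q)) (f z) r_gt0.
rewrite !fE (card_near_common_nbs_iso fbij fE).
rewrite (card_near_common_nbs_inside uD vD uv cardD hx hy cD dC (erefl (val z))).
move=> /(_ xy xz yz) k_eq; clear -k_gt0 k_neq1 r_gt0 k_eq; lia.
Qed.

Lemma KTS_J n r k : 0 < r -> r < n ->
  KTS (@J_adj n r) k <-> k = 1 \/ k = r \/ k = n - r.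
Proof.
move=> r_gt0 lt_rn; split; first exact: KTS_J_sub.
case=> [->|[->|->]]; split; rewrite ?subn_gt0 //.
- exists (J_vert n r), (@J_adj n r).
  by split; [exact: J_simple | exact: TS1_iso (J_simple n r_gt0).2].
- by exists 'I_n, (Kn n); split; [exact: Kn_simple | exact: TS_Kn_iso_J].
- by exists 'I_n, (Kn n); split; [exact: Kn_simple | exact: TS_Kn_compl_iso_J].
Qed.

Theorem theorem3p10 (n r : nat) (hn : 2 <= n) (hr1 : 1 <= r) (hr2 : r <= n - 1) :
  let s := minn r (n - r) in
  (n = 2 -> forall k, KTS (@J_adj n r) k <-> k = 1) /\
  (3 <= n -> s = 1 -> forall k, KTS (@J_adj n r) k <-> (k = 1 \/ k = n - 1)) /\
  (2 <= s -> n = 2 * s -> forall k, KTS (@J_adj n r) k <-> (k = 1 \/ k = s)) /\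
  (2 <= s -> 2 * s < n ->
     forall k, KTS (@J_adj n r) k <-> (k = 1 \/ k = s \/ k = n - s)).
Proof.
move=> s; have lt_rn : r < n by lia.
have KTS_r k := KTS_J k hr1 lt_rn.
rewrite /s; split; [|split; [|split]] => *; rewrite KTS_r; lia.
Qed.
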